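(* Let $(p_n)_{n \ge 1}$ and $(q_n)_{n \ge 1}$ be strictly increasing sequences of primes with $100 < q_1$ and $q_n < p_n < q_{n+1}$ for all $n \in \mathbb{N}$, set $\alpha_n := q_n/p_n$, and assume $\alpha_1 < \frac{1}{200}$ and $\alpha_{n+1} < \frac12 \alpha_n$ for all $n$. Let $A_2 := \{\alpha_{j_k} + \sum_{i=1}^{\ell} \alpha_{j_i} : \ell \in \mathbb{N},\ k \in \{1,\dots,\ell\},\ j_1,\dots,j_\ell \in \mathbb{N} \text{ distinct}\}$, $A_3 := \{2\alpha_{j_k} + \sum_{i=1}^{\ell} \alpha_{j_i} : \ell \in \mathbb{N},\ k \in \{1,\dots,\ell\},\ j_1,\dots,j_\ell \in \mathbb{N} \text{ distinct}\}$, $A := A_2 \cup A_3$, $B := \{1\} \cup \{1 - \sum_{i=1}^\ell \alpha_i : \ell \in \mathbb{N}\}$, and let $M$ be the additive submonoid of $\mathbb{Q}$ generated by $A \cup B$. Then: (1) $M$ is atomic and its set of atoms is exactly $A \cup B$; (2) $M$ does not satisfy the ACCP.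
   Context: An atom of the additive monoid $M$ is a nonzero element not expressible as a sum of two nonzero elements of $M$; $M$ is atomic if every nonzero element is a finite sum of atoms. $M$ satisfies the ACCP if every ascending chain of principal ideals $b_1 + M \subseteq b_2 + M \subseteq \cdots$ stabilizes. *)

From HB Require Import structures.
From mathcomp Require Import all_boot all_order all_algebra.
Set Implicit Arguments. Unset Strict Implicit. Unset Printing Implicit Defensive.
Import Order.TTheory GRing.Theory Num.Theory.
Local Open Scope ring_scope.

Definition submonoid_gen (S : rat -> Prop) : rat -> Prop :=
  fun x => exists s : seq rat, (forall a, a \in s -> S a) /\ x = \sum_(a <- s) a.

Definition is_atom (M : rat -> Prop) (x : rat) : Prop :=
  M x /\ x <> 0 /\ forall y z, M y -> M z -> x = y + z -> y = 0 \/ z = 0.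

Definition atomic (M : rat -> Prop) : Prop :=
  forall x, M x -> x <> 0 ->
    exists s : seq rat, (forall a, a \in s -> is_atom M a) /\ x = \sum_(a <- s) a.

Definition pideal (M : rat -> Prop) (b : rat) : rat -> Prop :=
  fun x => exists m, M m /\ x = b + m.

Definition ACCP (M : rat -> Prop) : Prop :=
  forall b : nat -> rat, (forall n, M (b n)) ->
    (forall n x, pideal M (b n) x -> pideal M (b n.+1) x) ->
    exists N, forall n, (N <= n)%N -> forall x, pideal M (b n) x <-> pideal M (b N) x.

(* Indices are shifted: index n : nat here stands for n+1 in the paper. *)
Definition alpha (p q : nat -> nat) (n : nat) : rat := (q n)%:R / (p n)%:R.

Definition A2 (p q : nat -> nat) : rat -> Prop :=
  fun x => exists (s : seq nat) (k : nat), uniq s /\ k \in s /\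
    x = alpha p q k + \sum_(j <- s) alpha p q j.

Definition A3 (p q : nat -> nat) : rat -> Prop :=
  fun x => exists (s : seq nat) (k : nat), uniq s /\ k \in s /\
    x = 2 * alpha p q k + \sum_(j <- s) alpha p q j.

Definition Aset (p q : nat -> nat) : rat -> Prop := fun x => A2 p q x \/ A3 p q x.

Definition Bset (p q : nat -> nat) : rat -> Prop :=
  fun x => x = 1 \/ exists l : nat, x = 1 - \sum_(i < l) alpha p q i.

Definition Mmon (p q : nat -> nat) : rat -> Prop :=
  submonoid_gen (fun x => Aset p q x \/ Bset p q x).

(* Every element of A ∪ B is c + Σ_j c_j α_j with c = 1 on B, c = 0 on A and
   integer coefficients c_j ∈ [-1, 3]: on B all c_j ≤ 0, on A all c_j ≥ 0 and
   c_j ≥ 2 only at the distinguished index.  If such an element were a sum of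
   at least two others, clearing denominators would make the prime p_j divide
   the difference of the j-th coefficients; that difference is smaller than
   p_j, so all coefficients agree, which the shapes above forbid.  Hence A ∪ B
   is a set of positive indecomposable generators: it is the set of atoms and
   M is atomic.  Finally b_n = 2 (1 - Σ_(i < n) α_i) ∈ M and
   b_n = b_(n+1) + 2 α_n with 2 α_n ∈ A_2, so the ideals b_n + M ascend
   strictly. *)

From HB Require Import structures.
From mathcomp Require Import all_boot all_order all_algebra.
From mathcomp Require Import zify ring lra.
Set Implicit Arguments.
Unset Strict Implicit.
Unset Printing Implicit Defensive.
Import Order.TTheory GRing.Theory Num.Theory.
Local Open Scope ring_scope.

Section GeneratedMonoid.
Variable S : rat -> Prop.

Lemma submonoid_gen0 : submonoid_gen S 0.
Proof. by exists [::]; rewrite big_nil. Qed.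

Lemma submonoid_gen_mem x : S x -> submonoid_gen S x.
Proof. by move=> Sx; exists [:: x]; rewrite big_seq1; split=> // a /[!inE] /eqP ->. Qed.

Lemma submonoid_genD x y :
  submonoid_gen S x -> submonoid_gen S y -> submonoid_gen S (x + y).
Proof.
move=> [s [Ss ->]] [t [St ->]]; exists (s ++ t); rewrite big_cat; split=> // a.
by rewrite mem_cat => /orP [/Ss | /St].
Qed.

Definition indecomposable : Prop :=
  forall x s, S x -> (forall a, a \in s -> S a) -> (1 < size s)%N ->
    x <> \sum_(a <- s) a.

Hypothesis S_gt0 : forall {x}, S x -> 0 < x.

Lemma submonoid_gen_ge0 x : submonoid_gen S x -> 0 <= x.
Proof.
by move=> [s [Ss ->]]; rewrite big_seq sumr_ge0 // => a /Ss /S_gt0 /ltW.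
Qed.

Lemma submonoid_gen_sum_gt0 a s :
  (forall b, b \in a :: s -> S b) -> 0 < \sum_(b <- a :: s) b.
Proof.
move=> Ss; rewrite big_cons.
have a_gt0 := S_gt0 (Ss a (mem_head a s)).
have s_ge0 : 0 <= \sum_(b <- s) b.
  by apply: submonoid_gen_ge0; exists s; split=> // b sb; apply/Ss/mem_behead.
lra.
Qed.

Hypothesis S_indecomposable : indecomposable.

Lemma is_atom_submonoid_gen x : is_atom (submonoid_gen S) x <-> S x.
Proof.
split=> [[[s [Ss ->]] [ne0 irreducible]] | Sx].
  case: s Ss ne0 irreducible => [|a [|b s]] Ss ne0 irreducible.
  - by rewrite big_nil in ne0.
  - by rewrite big_seq1; apply: Ss; rewrite mem_head.
  have Ma : submonoid_gen S a by apply/submonoid_gen_mem/Ss; rewrite mem_head.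
  have Mbs : submonoid_gen S (\sum_(c <- b :: s) c).
    by exists (b :: s); split=> // c bsc; apply: Ss; rewrite inE bsc orbT.
  have [a0 | bs0] := irreducible _ _ Ma Mbs (big_cons _ _ _ _ _ _).
    by move: (S_gt0 (Ss a (mem_head _ _))); rewrite a0 ltxx.
  suff : 0 < \sum_(c <- b :: s) c by rewrite bs0 ltxx.
  by apply: submonoid_gen_sum_gt0 => c bsc; apply: Ss; rewrite inE bsc orbT.
split; [exact: submonoid_gen_mem | split; first exact/eqP/lt0r_neq0/S_gt0].
move=> y z [[|y1 ys] [Sy ->]]; first by left; rewrite big_nil.
move=> [[|z1 zs] [Sz ->]]; first by right; rewrite big_nil.
rewrite -big_cat => decomp; exfalso; apply: S_indecomposable Sx _ _ decomp.
  by move=> a; rewrite mem_cat => /orP [/Sy | /Sz].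
by rewrite size_cat /= addnS.
Qed.

Lemma atomic_submonoid_gen : atomic (submonoid_gen S).
Proof.
move=> _ [s [Ss ->]] _; exists s; split=> // a /Ss.
by rewrite is_atom_submonoid_gen.
Qed.

End GeneratedMonoid.

Lemma not_ACCP_of_strict_chain (M : rat -> Prop) (b : nat -> rat) :
  M 0 -> (forall x y, M x -> M y -> M (x + y)) -> (forall x, M x -> 0 <= x) ->
  (forall n, M (b n)) -> (forall n, M (b n - b n.+1)) -> (forall n, b n.+1 < b n) ->
  ~ ACCP M.
Proof.
move=> M0 MD M_ge0 Mb M_step b_decr accp.
have [|N stable] := accp b Mb.
  move=> n _ [m [Mm ->]]; exists (b n - b n.+1 + m); split; first exact: MD.
  by ring.
have [m [Mm bN1E]] : pideal M (b N) (b N.+1).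
  by apply/(stable N.+1 (leqnSn N)); exists 0; rewrite addr0.
by have := M_ge0 m Mm; have := b_decr N; lra.
Qed.

Lemma dvdn_coef_frac_relation (d n : nat -> nat) (c0 : int) (c : nat -> int) N :
  (forall j, (0 < d j)%N) -> (forall i j, i != j -> coprime (d i) (d j)) ->
  (forall j, coprime (d j) (n j)) ->
  c0%:~R + \sum_(j < N) (c j)%:~R * ((n j)%:R / (d j)%:R) = 0 :> rat ->
  forall i, (i < N)%N -> (d i %| `|c i|)%N.
Proof.
move=> d_gt0 d_coprime dn_coprime rel i lt_iN.
pose D := (\prod_(j < N) d j)%N.
pose D' (j : 'I_N) := (\prod_(l < N | l != j) d l)%N.
have DE (j : 'I_N) : D = (d j * D' j)%N by rewrite /D (bigD1 j).
have rel_int : c0 * D%:Z + \sum_(j < N) c j * (n j * D' j)%:Z = 0.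
  apply/eqP; rewrite -(intr_eq0 rat).
  suff -> : (c0 * D%:Z + \sum_(j < N) c j * (n j * D' j)%:Z)%:~R =
            (c0%:~R + \sum_(j < N) (c j)%:~R * ((n j)%:R / (d j)%:R)) * D%:R :> rat.
    by rewrite rel mul0r.
  rewrite rmorphD rmorphM rmorph_sum /= mulrDl mulr_suml; congr (_ + _).
  apply: eq_bigr => j _; rewrite rmorphM /= -mulrA (DE j) !natrM.
  by rewrite -pmulrn natrM (mulrA (_ / _)) divfK // pnatr_eq0 -lt0n d_gt0.
have d_dvd_other : (d i %| c i * (n i * D' (Ordinal lt_iN))%:Z)%Z.
  move/eqP: rel_int; rewrite (bigD1 (Ordinal lt_iN)) //= addrCA addr_eq0 => /eqP ->.
  rewrite rpredN rpredD //.
    by apply: dvdz_mull; rewrite dvdzE /= (DE (Ordinal lt_iN)) dvdn_mulr.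
  apply: rpred_sum => j ji; apply: dvdz_mull; rewrite dvdzE /=.
  by apply: dvdn_mull; rewrite /D' (bigD1 (Ordinal lt_iN)) 1?eq_sym //= dvdn_mulr.
have coprime_rest : coprimez (d i) (n i * D' (Ordinal lt_iN))%:Z.
  rewrite coprimezE /= coprimeMr dn_coprime /=.
  apply: (big_ind (coprime (d i))) => [|x y|j ji]; first exact: coprimen1.
    by rewrite coprimeMr => -> ->.
  by apply: d_coprime; apply: contra ji => /eqP eij; apply/eqP/val_inj.
by move: d_dvd_other; rewrite Gauss_dvdzl // dvdzE.
Qed.

Lemma sum_ord_mem (R : pzSemiRingType) (F : nat -> R) (s : seq nat) N :
  uniq s -> (forall j, j \in s -> (j < N)%N) ->
  \sum_(j < N) ((j : nat) \in s)%:R * F j = \sum_(j <- s) F j.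
Proof.
move=> s_uniq lt_sN; rewrite -(big_mkord xpredT (fun j => (j \in s)%:R * F j)).
rewrite (eq_bigr (fun j => if j \in s then F j else 0)); last first.
  by move=> j _; case: (j \in s); rewrite ?mul1r ?mul0r.
rewrite -big_mkcond -big_filter; apply/perm_big/uniq_perm => //.
  by rewrite filter_uniq ?iota_uniq.
move=> j; rewrite mem_filter mem_iota subn0 add0n andbC /=.
by case: (boolP (j \in s)) => [/lt_sN -> | _]; rewrite ?andbF.
Qed.

Lemma map_exists2 (T : Type) (U : eqType) (P : pred T) (f : T -> U) (s : seq U) :
  (forall y, y \in s -> exists2 x, P x & y = f x) ->
  exists2 xs, all P xs & s = map f xs.
Proof.
elim: s => [|y s IH] s_img; first by exists [::].
have [x Px ->] := s_img y (mem_head y s).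
have [|xs Pxs ->] := IH; first by move=> z z_s; apply: s_img; rewrite inE z_s orbT.
by exists (x :: xs); rewrite /= ?Px.
Qed.

(* [GenA s k t] stands for the element (1 + t) α_k + Σ_(j ∈ s) α_j of A_2
   (t = false) or A_3 (t = true), and [GenB l] for 1 - Σ_(i < l) α_i ∈ B;
   [gen_coef g j] is the coefficient of α_j in it. *)
Inductive gen := GenA of seq nat & nat & bool | GenB of nat.

Lemma gen_comparable : comparable gen.
Proof. rewrite /comparable /decidable; decide equality; exact: eq_comparable. Qed.

HB.instance Definition _ := hasDecEq.Build gen (compareP gen_comparable).

Definition gen_valid (g : gen) : bool :=
  if g is GenA s k _ then uniq s && (k \in s) else true.

Definition is_genB (g : gen) : bool := if g is GenB _ then true else false.

Definition gen_key (g : gen) : nat := if g is GenA _ k _ then k else 0.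

Definition gen_bound (g : gen) : nat :=
  match g with GenA s _ _ => \max_(j <- s) j.+1 | GenB l => l end.

Definition gen_coef (g : gen) (j : nat) : int :=
  match g with
  | GenA s k t => (j \in s)%:Z + (if t then 2 else 1) * (j == k)%:Z
  | GenB l => - (j < l)%N%:Z
  end.

Lemma gen_coef_ge g j : - (is_genB g)%:Z <= gen_coef g j.
Proof.
by case: g => [s k t|l] /=; [case: (j \in s) (j == k) t => [] [] [] | case: (j < l)%N].
Qed.

Lemma gen_coef_le g j : gen_coef g j <= if is_genB g then 0 else 3.
Proof.
by case: g => [s k t|l] /=; [case: (j \in s) (j == k) t => [] [] [] | case: (j < l)%N].
Qed.

Lemma gen_coefA_ge0 g j : ~~ is_genB g -> 0 <= gen_coef g j.
Proof. by move=> /negbTE gA; have := gen_coef_ge g j; rewrite gA. Qed.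

Lemma gen_coef_key g : gen_valid g -> ~~ is_genB g -> 2 <= gen_coef g (gen_key g).
Proof. by case: g => [s k t|] //= /andP [_ ->] _; rewrite eqxx; case: t. Qed.

Lemma gen_coef_ge2 g j : ~~ is_genB g -> 2 <= gen_coef g j -> j = gen_key g.
Proof.
by case: g => [s k t|] //= _; case: (j \in s) t (eqVneq j k) => [] [] [].
Qed.

Lemma sum_gen_coef_ge gs j : - (count is_genB gs)%:Z <= \sum_(a <- gs) gen_coef a j.
Proof.
elim: gs => [|a gs IH]; first by rewrite big_nil.
by rewrite big_cons /= PoszD opprD lerD ?gen_coef_ge.
Qed.

Lemma genB_not_coef_sum g gs :
  is_genB g -> all gen_valid gs -> (1 < size gs)%N -> count is_genB gs = 1%N ->
  ~ (forall j, gen_coef g j = \sum_(a <- gs) gen_coef a j).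
Proof.
move=> gB gs_valid size_gs countB coef_sum.
have [a a_gs aA] : exists2 a : gen, a \in gs & ~~ is_genB a.
  apply/hasP; rewrite has_count -(leq_add2l (count is_genB gs)) count_predC.
  by rewrite countB.
have countB_rest : count is_genB (rem a gs) = 1%N.
  by move: countB; rewrite (permP (perm_to_rem a_gs)) /= (negbTE aA).
(* The cast keeps the index type syntactically [gen], as in [sum_gen_coef_ge],
   so that lia sees a single atom. *)
have split_sum : \sum_(b <- gs) gen_coef b (gen_key a) =
    gen_coef a (gen_key a) + \sum_(b <- (rem a gs : seq gen)) gen_coef b (gen_key a).
  by rewrite (big_rem a a_gs).
have := coef_sum (gen_key a); rewrite split_sum.
have := sum_gen_coef_ge (rem a gs) (gen_key a); rewrite countB_rest.
have := gen_coef_key (allP gs_valid a a_gs) aA.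
by have := gen_coef_le g (gen_key a); rewrite gB; lia.
Qed.

Lemma genA_not_coef_sum g gs :
  ~~ is_genB g -> all gen_valid gs -> (1 < size gs)%N -> count is_genB gs = 0%N ->
  ~ (forall j, gen_coef g j = \sum_(a <- gs) gen_coef a j).
Proof.
move=> gA gs_valid size_gs countB.
have gsA : all (predC is_genB) gs by rewrite all_predC has_count countB.
case: gs size_gs gs_valid gsA {countB} => [|a1 [|a2 rest]] //= _.
move=> /and3P [a1_valid a2_valid _] /and3P [a1A a2A restA] coef_sum.
have {}coef_sum j : gen_coef g j =
    gen_coef a1 j + (gen_coef a2 j + \sum_(a <- rest) gen_coef a j).
  by rewrite coef_sum !big_cons.
have rest_ge0 j : 0 <= \sum_(a <- rest) gen_coef a j.
  by rewrite big_seq sumr_ge0 // => a /(allP restA) /gen_coefA_ge0.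
have k1 := gen_coef_key a1_valid a1A; have k2 := gen_coef_key a2_valid a2A.
have key1 : gen_key a1 = gen_key g.
  apply: gen_coef_ge2 gA _; rewrite coef_sum.
  by have := gen_coefA_ge0 (gen_key a1) a2A; have := rest_ge0 (gen_key a1); lia.
have key2 : gen_key a2 = gen_key g.
  apply: gen_coef_ge2 gA _; rewrite coef_sum.
  by have := gen_coefA_ge0 (gen_key a2) a1A; have := rest_ge0 (gen_key a2); lia.
have := gen_coef_le g (gen_key g); rewrite (negbTE gA) coef_sum.
by rewrite key1 in k1; rewrite key2 in k2; have := rest_ge0 (gen_key g); lia.
Qed.

Lemma gen_coef_not_sum g gs :
  all gen_valid gs -> (1 < size gs)%N -> is_genB g = count is_genB gs :> nat ->
  ~ (forall j, gen_coef g j = \sum_(a <- gs) gen_coef a j).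
Proof.
move=> gs_valid size_gs countB; case: (boolP (is_genB g)) => [gB | gA] in countB *.
  exact: genB_not_coef_sum.
exact: genA_not_coef_sum.
Qed.

Section Generators.
Variables p q : nat -> nat.
Hypothesis p_prime : forall j, prime (p j).
Hypothesis p_inj : injective p.
(* Together with [q_lt_p] this makes [p j > 4], more than any difference of
   coefficients that can occur (see [gen_coef_sum_diff_lt]). *)
Hypothesis q_gt3 : forall j, (3 < q j)%N.
Hypothesis q_lt_p : forall j, (q j < p j)%N.
Hypothesis alpha0_small : alpha p q 0 < 1 / 200.
Hypothesis alpha_halving : forall j, alpha p q j.+1 < alpha p q j / 2.

Local Notation α := (alpha p q).

Lemma alpha_gt0 j : 0 < α j.
Proof. by rewrite divr_gt0 ?ltr0n ?(prime_gt0 (p_prime j)) ?(ltn_trans _ (q_gt3 j)). Qed.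

Lemma sum_alpha_le N : \sum_(j < N) α j <= 2 * α 0.
Proof.
suff : \sum_(j < N) α j + 2 * α N <= 2 * α 0 by have := alpha_gt0 N; lra.
elim: N => [|N IH]; first by rewrite big_ord0 add0r.
by rewrite big_ord_recr /=; have := alpha_halving N; lra.
Qed.

Definition gen_val (g : gen) : rat :=
  match g with
  | GenA s k t => (if t then 2 else 1) * α k + \sum_(j <- s) α j
  | GenB l => 1 - \sum_(i < l) α i
  end.

Lemma gen_val_coef g N : gen_valid g -> (gen_bound g <= N)%N ->
  gen_val g = (is_genB g)%:R + \sum_(j < N) (gen_coef g j)%:~R * α j.
Proof.
case: g => [s k t /andP [s_uniq k_s] | l _] /= le_bN; last first.
  rewrite (big_ord_widen _ _ le_bN) big_mkcond -sumrN; congr (_ + _).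
  by apply: eq_bigr => j _; case: (j < l)%N; rewrite /= ?mulN1r ?mul1r ?oppr0 ?mul0r.
have lt_sN j : j \in s -> (j < N)%N.
  by move=> j_s; apply: leq_trans le_bN; apply: (leq_bigmax_seq _ j_s).
under [in RHS]eq_bigr => j _ do
  rewrite intrD intrM mulrDl -mulrA -!pmulrn -(mem_seq1 (j : nat) k).
rewrite big_split -mulr_sumr /= !sum_ord_mem // ?big_seq1 ?add0r 1?addrC.
  by case: t.
by move=> j; rewrite mem_seq1 => /eqP ->; apply: lt_sN.
Qed.

Lemma gen_val_gt0 g : 0 < gen_val g.
Proof.
case: g => [s k t | l] /=.
  apply: ltr_wpDr; first by rewrite sumr_ge0 // => j _; exact/ltW/alpha_gt0.
  by rewrite mulr_gt0 ?alpha_gt0 //; case: t.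
by rewrite subr_gt0 (le_lt_trans (sum_alpha_le l)) //; have := alpha0_small; lra.
Qed.

Lemma gen_valB_ge g : is_genB g -> 2 / 3 <= gen_val g.
Proof.
case: g => // l _ /=; rewrite (le_trans _ (lerB (lexx 1) (sum_alpha_le l))) //.
by have := alpha0_small; lra.
Qed.

Lemma gen_val_le1 g : gen_valid g -> gen_val g <= 1.
Proof.
move=> g_valid; rewrite (gen_val_coef g_valid (leqnn _)).
case: (boolP (is_genB g)) => [gB | gA].
  suff : \sum_(j < gen_bound g) (gen_coef g j)%:~R * α j <= 0 by rewrite /=; lra.
  rewrite sumr_le0 // => j _; rewrite mulr_le0_ge0 ?(ltW (alpha_gt0 j)) // lerz0.
  by have := gen_coef_le g j; rewrite gB.
have : \sum_(j < gen_bound g) (gen_coef g j)%:~R * α j <=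
       3 * \sum_(j < gen_bound g) α j.
  rewrite mulr_sumr ler_sum // => j _; rewrite ler_wpM2r ?(ltW (alpha_gt0 j)) //.
  by have := gen_coef_le g j; rewrite (negbTE gA) -(ler_int rat).
by have := sum_alpha_le (gen_bound g); have := alpha0_small; rewrite /=; lra.
Qed.

Lemma gen_coef_alpha_le g j : gen_valid g -> (gen_coef g j)%:~R * α j <= gen_val g.
Proof.
move=> g_valid; case: (boolP (is_genB g)) => [gB | gA].
  apply: le_trans (ltW (gen_val_gt0 g)).
  rewrite mulr_le0_ge0 ?(ltW (alpha_gt0 j)) // lerz0.
  by have := gen_coef_le g j; rewrite gB.
have lt_jN : (j < maxn (gen_bound g) j.+1)%N by rewrite leq_max leqnn orbT.
rewrite (gen_val_coef g_valid (leq_maxl _ j.+1)) (negbTE gA) add0r.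
rewrite (bigD1 (Ordinal lt_jN)) //= lerDl sumr_ge0 // => i _.
by rewrite mulr_ge0 ?(ltW (alpha_gt0 i)) ?ler0z ?gen_coefA_ge0.
Qed.

Lemma count_genB_le_sum gs : (count is_genB gs)%:R * (2 / 3) <= \sum_(a <- gs) gen_val a.
Proof.
elim: gs => [|a gs IH]; first by rewrite big_nil mul0r.
rewrite big_cons /= natrD mulrDl lerD //.
case: (boolP (is_genB a)) => [/gen_valB_ge | _]; first by rewrite mul1r.
by rewrite mul0r (ltW (gen_val_gt0 a)).
Qed.

(* At most one summand lies in B (each is worth more than 1/2 and the total is
   at most 1), so the j-th coefficient sum is at least -1; and it is at most
   p_j / q_j since each summand dominates its own j-th term. *)
Lemma gen_coef_sum_diff_lt g gs j :
  gen_valid g -> all gen_valid gs -> gen_val g = \sum_(a <- gs) gen_val a ->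
  (`|(gen_coef g j - \sum_(a <- gs) gen_coef a j)%R| < p j)%N.
Proof.
move=> g_valid gs_valid val_sum.
have countB_le1 : (count is_genB gs <= 1)%N.
  rewrite -ltnS -(ltr_nat rat).
  have := count_genB_le_sum gs; rewrite -val_sum; have := gen_val_le1 g_valid; lra.
have S_ge := sum_gen_coef_ge gs j.
have S_le : (\sum_(a <- gs) gen_coef a j) * (q j)%:Z <= (p j)%:Z.
  rewrite -(ler_int rat) rmorphM /=.
  have : (\sum_(a <- gs) gen_coef a j)%:~R * α j <= 1.
    rewrite rmorph_sum mulr_suml /= (le_trans _ (gen_val_le1 g_valid)) // val_sum.
    rewrite big_seq [X in _ <= X]big_seq ler_sum // => a a_gs.
    exact/gen_coef_alpha_le/(allP gs_valid).
  by rewrite mulrA ler_pdivrMr ?ltr0n ?prime_gt0 // mul1r.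
have := gen_coef_ge g j; have := gen_coef_le g j; have := q_gt3 j; have := q_lt_p j.
by case: (is_genB g); nia.
Qed.

Lemma alpha_relation_trivial N (c0 : int) (c : nat -> int) :
  (forall j, (`|c j| < p j)%N) ->
  c0%:~R + \sum_(j < N) (c j)%:~R * α j = 0 ->
  c0 = 0 /\ forall j, (j < N)%N -> c j = 0.
Proof.
move=> c_small rel.
have p_gt0 j : (0 < p j)%N := prime_gt0 (p_prime j).
have p_coprime i j : i != j -> coprime (p i) (p j).
  by move=> neq_ij; rewrite prime_coprime // dvdn_prime2 // (inj_eq p_inj).
have pq_coprime j : coprime (p j) (q j).
  by rewrite prime_coprime // gtnNdvd // (ltn_trans _ (q_gt3 j)).
have c_eq0 j : (j < N)%N -> c j = 0.
  move=> lt_jN; apply/eqP; rewrite -absz_eq0 -leqn0 leqNgt; apply/negP => c_gt0.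
  have := dvdn_leq c_gt0 (dvdn_coef_frac_relation p_gt0 p_coprime pq_coprime rel lt_jN).
  by rewrite leqNgt c_small.
split=> //; apply/eqP; rewrite -(intr_eq0 rat) -rel big1 ?addr0 // => j _.
by rewrite c_eq0 // mul0r.
Qed.

Lemma gen_val_sum_coef gs N :
  all gen_valid gs -> (forall a, a \in gs -> (gen_bound a <= N)%N) ->
  \sum_(a <- gs) gen_val a = (count is_genB gs)%:R +
    \sum_(j < N) (\sum_(a <- gs) gen_coef a j)%:~R * α j.
Proof.
elim: gs => [|a gs IH] /=.
  by move=> _ _; rewrite big_nil big1 ?addr0 // => j _; rewrite big_nil mul0r.
move=> /andP [a_valid gs_valid] le_bN.
rewrite big_cons IH => [|//|b b_gs]; last by apply: le_bN; rewrite inE b_gs orbT.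
rewrite (gen_val_coef a_valid (le_bN a (mem_head a gs))) natrD addrACA -big_split /=.
by congr (_ + _); apply: eq_bigr => j _; rewrite big_cons intrD mulrDl.
Qed.

Lemma gen_sum_coef g gs :
  gen_valid g -> all gen_valid gs -> gen_val g = \sum_(a <- gs) gen_val a ->
  is_genB g = count is_genB gs :> nat /\
  forall j, gen_coef g j = \sum_(a <- gs) gen_coef a j.
Proof.
move=> g_valid gs_valid val_sum.
pose N0 := \max_(a <- g :: gs) gen_bound a.
have le_bN a : a \in g :: gs -> (gen_bound a <= N0)%N.
  by move=> a_in; apply: (leq_bigmax_seq _ a_in).
have relation N : (N0 <= N)%N ->
    ((is_genB g)%:Z - (count is_genB gs)%:Z)%:~R +
    \sum_(j < N) (gen_coef g j - \sum_(a <- gs) gen_coef a j)%:~R * α j = 0.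
  move=> le_N0N; have le_b a a_in := leq_trans (le_bN a a_in) le_N0N.
  transitivity (gen_val g - \sum_(a <- gs) gen_val a); last by rewrite val_sum subrr.
  rewrite (gen_val_coef g_valid (le_b g (mem_head g gs))).
  have le_b_gs a : a \in gs -> (gen_bound a <= N)%N.
    by move=> a_gs; apply: le_b; rewrite inE a_gs orbT.
  rewrite (gen_val_sum_coef gs_valid le_b_gs).
  rewrite opprD addrACA intrB -!pmulrn -sumrB; congr (_ + _).
  by apply: eq_bigr => j _; rewrite intrB mulrBl.
have trivial N le_N0N := alpha_relation_trivial
  (fun j => gen_coef_sum_diff_lt j g_valid gs_valid val_sum) (relation N le_N0N).
split; first by have [/eqP] := trivial N0 (leqnn N0); rewrite subr_eq0 => /eqP [].
move=> j; have [_ /(_ j)] := trivial (maxn N0 j.+1) (leq_maxl N0 j.+1).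
by rewrite leq_max ltnSn orbT => /(_ isT) /eqP; rewrite subr_eq0 => /eqP.
Qed.

Lemma gen_valP x :
  Aset p q x \/ Bset p q x <-> exists2 g, gen_valid g & x = gen_val g.
Proof.
split=> [[[[s [k [s_uniq [k_s ->]]]] | [s [k [s_uniq [k_s ->]]]]] | [-> | [l ->]]] | ].
- by exists (GenA s k false); rewrite /= ?s_uniq ?k_s ?mul1r.
- by exists (GenA s k true); rewrite /= ?s_uniq ?k_s.
- by exists (GenB 0); rewrite /= ?big_ord0 ?subr0.
- by exists (GenB l).
case=> [[s k t | l] g_valid ->]; last by right; right; exists l.
move: g_valid => /andP [s_uniq k_s]; left.
by case: t; [right | left]; exists s, k; rewrite /= ?mul1r.
Qed.

Lemma gen_gt0 x : Aset p q x \/ Bset p q x -> 0 < x.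
Proof. by move=> /gen_valP [g _ ->]; apply: gen_val_gt0. Qed.

Lemma gen_indecomposable : indecomposable (fun x => Aset p q x \/ Bset p q x).
Proof.
move=> x s /gen_valP [g g_valid ->] s_gen size_s.
have [gs gs_valid s_def] : exists2 gs, all gen_valid gs & s = map gen_val gs.
  by apply: map_exists2 => y /s_gen /gen_valP.
rewrite s_def size_map big_map in size_s * => val_sum.
have [countB coef_sum] := gen_sum_coef g_valid gs_valid val_sum.
exact: gen_coef_not_sum gs_valid size_s countB coef_sum.
Qed.

End Generators.

Theorem proposition5p3 (p q : nat -> nat) :
  (forall n, prime (p n)) -> (forall n, prime (q n)) ->
  (forall n, (p n < p n.+1)%N) -> (forall n, (q n < q n.+1)%N) ->
  (100 < q 0)%N ->
  (forall n, (q n < p n)%N /\ (p n < q n.+1)%N) ->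
  alpha p q 0 < 1 / 200 ->
  (forall n, alpha p q n.+1 < alpha p q n / 2) ->
  (atomic (Mmon p q) /\
   (forall x, is_atom (Mmon p q) x <-> (Aset p q x \/ Bset p q x))) /\
  ~ ACCP (Mmon p q).
Proof.
move=> p_prime _ p_incr q_incr q0_gt100 p_q_interlace alpha0_small alpha_halving.
have p_inj : injective p := incn_inj (leq_mono (homo_ltn ltn_trans p_incr)).
have q_gt3 j : (3 < q j)%N.
  by have := homo_leq leqnn leq_trans (fun n => ltnW (q_incr n)) (leq0n j); lia.
have q_lt_p j : (q j < p j)%N := (p_q_interlace j).1.
have gen_pos := gen_gt0 p_prime q_gt3 alpha0_small alpha_halving.
have gen_indec :=
  gen_indecomposable p_prime p_inj q_gt3 q_lt_p alpha0_small alpha_halving.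
split; first split.
- exact: atomic_submonoid_gen gen_pos gen_indec.
- exact: is_atom_submonoid_gen gen_pos gen_indec.
pose b n := (1 - \sum_(i < n) alpha p q i) + (1 - \sum_(i < n) alpha p q i).
apply: (@not_ACCP_of_strict_chain _ b).
- exact: submonoid_gen0.
- exact: submonoid_genD.
- exact: submonoid_gen_ge0 gen_pos.
- by move=> n; apply: submonoid_genD; apply: submonoid_gen_mem; right; right; exists n.
- move=> n; apply: submonoid_gen_mem; left; left; exists [:: n], n.
  by rewrite mem_seq1 eqxx big_seq1 /b big_ord_recr /=; do !split; ring.
- by move=> n; rewrite /b big_ord_recr /=; have := alpha_gt0 p_prime q_gt3 n; lra.
Qed.
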